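(* Let $m\ge 3$, $H=B(l_1,\ldots,l_m)$ and $G=H^2$. Then $G$ is equitably $(m+2)$-choosable.
   Context: All graphs are finite and simple. For $m,l_1,\ldots,l_m\in\mathbb{N}$ with $l_1\le\cdots\le l_m$, $B(l_1,\ldots,l_m)$ is the graph with vertex set $\{u\}\cup\{v_{i,j}: i\in[m], j\in[l_i]\}$ in which, for each $i\in[m]$, consecutive vertices in the sequence $u, v_{i,1},\ldots,v_{i,l_i}$ are adjacent (and there are no other edges). For a graph $H$, $H^2$ has vertex set $V(H)$ with two vertices adjacent iff their distance in $H$ is 1 or 2. A $k$-assignment $L$ assigns to each vertex a set of exactly $k$ colors; an equitable $L$-coloring of $G$ is a proper coloring $f$ with $f(v)\in L(v)$ such that no color is used more than $\lceil |V(G)|/k\rceil$ times; $G$ is equitably $k$-choosable if it has an equitable $L$-coloring for every $k$-assignment $L$. *)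

From mathcomp Require Import all_boot.
Set Implicit Arguments. Unset Strict Implicit. Unset Printing Implicit Defensive.

(* Vertex type of the spider B(l_1,...,l_m): [None] is the centre u,
   [Some (Tagged _ i j)] (with j : 'I_(l i), 0-indexed) is v_{i, j+1}. *)
Definition spider_vertex (m : nat) (l : 'I_m -> nat) : finType :=
  option {i : 'I_m & 'I_(l i)}.

Definition spider_next m (l : 'I_m -> nat) (x y : spider_vertex l) : bool :=
  match x, y with
  | None, Some (existT i j) => nat_of_ord j == 0
  | Some (existT i j), Some (existT i' j') => (i == i') && (j.+1 == j')
  | _, _ => false
  end.

Definition spider_adj m (l : 'I_m -> nat) : rel (spider_vertex l) :=
  fun x y => spider_next x y || spider_next y x.

Definition graph_square (T : finType) (e : rel T) : rel T :=
  fun x y => (x != y) && (e x y || [exists z, e x z && e z y]).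

Definition ceil_div (n k : nat) : nat := (n + k.-1) %/ k.

Definition k_assignment (T : finType) (k : nat) (L : T -> seq nat) : Prop :=
  forall v, uniq (L v) /\ size (L v) = k.

Definition equitable_L_coloring (T : finType) (e : rel T) (k : nat)
    (L : T -> seq nat) (f : T -> nat) : Prop :=
  (forall v, f v \in L v) /\
  (forall x y, e x y -> f x != f y) /\
  (forall c : nat, #|[set v | f v == c]| <= ceil_div #|T| k).

Definition equitably_choosable (T : finType) (e : rel T) (k : nat) : Prop :=
  forall L : T -> seq nat, k_assignment k L ->
    exists f : T -> nat, equitable_L_coloring e k L f.

From mathcomp Require Import all_boot zify.
Set Implicit Arguments. Unset Strict Implicit. Unset Printing Implicit Defensive.

(* Label the centre 0 and then the vertices leg after leg, so that consecutive
   vertices of a leg get consecutive labels, and cut the labels into windows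
   of k = m+2 consecutive labels; there are ceil(|V| / k) windows.  A proper
   colouring that is injective on every window uses each colour at most once
   per window, hence is equitable.  Such a list colouring is built greedily
   (greedy_equitable) along an order in which every vertex has fewer than k
   earlier conflicts, i.e. square-neighbours or window-mates.  The order takes
   the centre and the first vertex of each leg first (at most m predecessors),
   then the deep vertices window by window, within a window by priority:
   offset 0, then offset 1 or depth 1, then the others.  A case analysis on
   the priority bounds the conflicts of a deep vertex (card_conflicts_prio0,
   _prio1, _prio2); the tight case uses that a full window beyond the first
   contains a priority-0 vertex (full_window_deep), which is where m >= 3 and
   the sortedness of the legs are needed. *)

Lemma exists_fresh (s t : seq nat) : uniq s -> size t < size s ->
  exists2 c, c \in s & c \notin t.
Proof.
move=> s_uniq lt_ts; apply/hasP; apply: contraLR lt_ts => /hasPn s_sub_t.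
by rewrite -leqNgt; apply: uniq_leq_size s_uniq _ => c /s_sub_t; rewrite negbK.
Qed.

Lemma card_le_size_inj (T : finType) (A : {pred T}) (g : T -> nat) (s : seq nat) :
  {in A &, injective g} -> {in A, forall x, g x \in s} -> #|A| <= size s.
Proof.
move=> g_inj g_in; rewrite cardE -(size_map g); apply: uniq_leq_size.
  by rewrite map_inj_in_uniq ?enum_uniq // => x y; rewrite !mem_enum; exact: g_inj.
by move=> y /mapP [x]; rewrite mem_enum => xA ->; exact: g_in.
Qed.

Lemma cardsD1_in (T : finType) (A : {set T}) x : x \in A -> #|A :\ x| = #|A| - 1.
Proof. by move=> xA; rewrite [#|A|](cardsD1 x) xA add1n subSS subn0. Qed.

Lemma divmod_unique (d x t o : nat) : o < d -> x = t * d + o ->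
  x %/ d = t /\ x %% d = o.
Proof.
move=> od ->; have d_gt0 : 0 < d by apply: leq_ltn_trans od.
by rewrite divnMDl // modnMDl divn_small // modn_small // addn0.
Qed.

Section GreedyColoring.
Variables (T : finType) (e : rel T) (k : nat) (b r : T -> nat).
Hypotheses (e_sym : symmetric e) (e_irr : irreflexive e) (r_inj : injective r).

(* w is a conflict of v: w precedes v in the order r and is either adjacent to
   v or in the same class of b, so the two must receive different colours. *)
Definition conflict (v w : T) := (r w < r v) && (e v w || (b w == b v)).

Hypothesis few_conflicts : forall v, #|[set w | conflict v w]| < k.

Lemma conflict_neq v w : conflict v w -> w != v.
Proof. by case/andP=> rwv _; apply/eqP=> wv; rewrite wv ltnn in rwv. Qed.

Lemma greedy_prefix (L : T -> seq nat) : k_assignment k L -> forall N,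
  exists f : T -> nat, forall v, r v < N ->
    f v \in L v /\ forall w, conflict v w -> f v != f w.
Proof.
move=> kL; elim=> [|N [f hf]]; first by exists (fun=> 0).
case: (pickP (fun v => r v == N)) => [v0 /eqP rv0|none]; last first.
  exists f => v; rewrite ltnS leq_eqVlt => /predU1P [rvN|]; last exact: hf.
  by have := none v; rewrite rvN eqxx.
have [c cL c_new] : exists2 c, c \in L v0 &
    c \notin [seq f w | w <- enum [set w | conflict v0 w]].
  apply: exists_fresh; first by case: (kL v0).
  by rewrite size_map -cardE; case: (kL v0) => _ ->; exact: few_conflicts.
exists (fun x => if x == v0 then c else f x) => v.
rewrite ltnS leq_eqVlt => /predU1P [rvN|rvN].
  have -> : v = v0 by apply: r_inj; rewrite rvN rv0.
  rewrite eqxx; split=> // w cw; rewrite (negbTE (conflict_neq cw)).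
  by apply: contra c_new => /eqP ->; apply: map_f; rewrite mem_enum inE.
have vv0 : v != v0 by apply/eqP=> vv0; rewrite vv0 rv0 ltnn in rvN.
have [fL fC] := hf v rvN; rewrite (negbTE vv0); split=> // w cw.
have wv0 : w != v0.
  by apply/eqP=> wv0; case/andP: cw; rewrite wv0 rv0 => /(ltn_trans rvN); rewrite ltnn.
by rewrite (negbTE wv0); exact: fC.
Qed.

(* If moreover b takes fewer than ceil(|T|/k) values, the greedy colouring is
   injective on every class of b, so each colour is used at most that often. *)
Theorem greedy_equitable : (forall v, b v < ceil_div #|T| k) ->
  equitably_choosable e k.
Proof.
move=> b_lt L kL; have [f hf] := greedy_prefix kL (\max_(v : T) r v).+1.
have {}hf v : f v \in L v /\ forall w, conflict v w -> f v != f w.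
  by apply: hf; rewrite ltnS; exact: leq_bigmax.
have f_sep x y : x != y -> e x y || (b x == b y) -> f x != f y.
  move=> xy exy; case: (ltngtP (r x) (r y)) => [lt|lt|eq].
  - by rewrite eq_sym; apply: (hf y).2; rewrite /conflict lt e_sym.
  - by apply: (hf x).2; rewrite /conflict lt eq_sym.
  - by rewrite (r_inj eq) eqxx in xy.
exists f; split; first by move=> v; case: (hf v).
split=> [x y exy|c].
  by apply: f_sep; [apply: contraTneq exy => ->; rewrite e_irr | rewrite exy].
rewrite -(size_iota 0 (ceil_div #|T| k)); apply: (@card_le_size_inj _ _ b).
  move=> x y; rewrite !inE => /eqP fx /eqP fy bxy; apply: contraTeq isT => xy.
  by have := f_sep x y xy; rewrite bxy eqxx orbT fx fy eqxx => /(_ isT).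
by move=> x _; rewrite mem_iota b_lt.
Qed.

End GreedyColoring.

Section Spider.
Variables (m : nat) (l : 'I_m -> nat).

Local Notation T := (spider_vertex l).
Local Notation leg_vertex := {i : 'I_m & 'I_(l i)}.
Local Notation adj := (@spider_adj m l).
Local Notation sq := (graph_square adj).

(* A non-central vertex v_{i, j+1} lies on leg i at depth j (0-indexed). *)
Definition leg (p : leg_vertex) : 'I_m := tag p.
Definition dep (p : leg_vertex) : nat := tagged p.

Lemma leg_vertex_eq p p' : leg p = leg p' -> dep p = dep p' -> p = p'.
Proof.
case: p p' => [i j] [i' j']; rewrite /leg /= => ii'; subst i'.
by rewrite /dep /= => /val_inj ->.
Qed.

Lemma dep_lt p : dep p < l (leg p).
Proof. exact: ltn_ord. Qed.

Definition leg_start (a : 'I_m) := \sum_(i < m | i < a) l i.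
Definition label (v : T) := if v is Some p then (leg_start (leg p) + dep p).+1 else 0.

Definition nverts := (\sum_(i < m) l i).+1.

Lemma card_vertices : #|T| = nverts.
Proof.
rewrite /spider_vertex card_option card_tagged sumnE big_map big_enum /nverts /=.
by congr _.+1; apply: eq_bigr => i _; rewrite card_ord.
Qed.

Lemma leg_start_lt (a c : 'I_m) : a < c -> leg_start a + l a <= leg_start c.
Proof.
move=> ac; rewrite /leg_start [X in _ <= X](bigD1 a) //= addnC leq_add2l.
apply: (sub_le_big leqnn (fun x y => leq_addr y x)) => i ia.
by rewrite (ltn_trans ia ac) /=; apply: contraTneq ia => ->; rewrite ltnn.
Qed.

Lemma leg_start_bound (a : 'I_m) : leg_start a + l a <= \sum_(i < m) l i.
Proof.
rewrite /leg_start [X in _ <= X](bigD1 a) //= addnC leq_add2l.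
apply: (sub_le_big leqnn (fun x y => leq_addr y x)) => i ia.
by apply: contraTneq ia => ->; rewrite ltnn.
Qed.

Lemma leg_start_short (a : 'I_m) :
  (forall i : 'I_m, i < a -> l i <= 2) -> leg_start a <= 2 * a.
Proof.
move=> short; apply: (@leq_trans (\sum_(i < m | i < a) 2)).
  by apply: leq_sum => i; exact: short.
rewrite big_const iter_addn_0 leq_mul2l /= -[X in _ <= X](size_iota 0 a).
apply: (@card_le_size_inj _ _ val) => [x y _ _|x]; first exact: val_inj.
by rewrite mem_iota unfold_in.
Qed.

Lemma label_lt v : label v < nverts.
Proof.
case: v => [p|] //; rewrite /nverts ltnS.
by apply: leq_trans (leg_start_bound (leg p)); rewrite ltn_add2l dep_lt.
Qed.

Lemma label_inj : injective label.
Proof.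
have leg_lt (p p' : leg_vertex) : leg p < leg p' -> label (Some p) < label (Some p').
  move=> lt; rewrite /= ltnS; apply: leq_trans (leq_addr _ _).
  by apply: leq_trans (leg_start_lt lt); rewrite ltn_add2l dep_lt.
case=> [p|] [p'|] //= E; congr Some.
case: (ltngtP (leg p) (leg p')) => [lt|lt|/val_inj eq_leg].
- by have := leg_lt _ _ lt; rewrite /= E ltnn.
- by have := leg_lt _ _ lt; rewrite /= E ltnn.
- by apply: leg_vertex_eq => //; move: E; rewrite eq_leg => /succn_inj /addnI.
Qed.

(* Depth of a vertex (0 for the centre); the deep vertices are those at
   distance at least 2 from the centre. *)
Definition depth (v : T) := if v is Some p then dep p else 0.
Definition deep (v : T) := 0 < depth v.

Lemma spider_adjE x y : adj x y -> match x, y with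
  | None, None => False
  | None, Some p | Some p, None => dep p = 0
  | Some p, Some p' => leg p = leg p' /\ (dep p' = (dep p).+1 \/ dep p = (dep p').+1)
  end.
Proof.
rewrite /spider_adj /spider_next.
case: x => [[i j]|]; case: y => [[i' j']|] //=; rewrite /dep /leg /= ?orbF.
- by case/orP => /andP [/eqP E /eqP F]; (split; [by rewrite E | lia]).
- by move/eqP.
- by move/eqP.
Qed.

Lemma square_nbr_deep p y : 0 < dep p -> sq (Some p) y ->
  (y = None /\ dep p = 1) \/ exists2 p', y = Some p' &
    leg p' = leg p /\ (dep p' + 1 = dep p \/ dep p' + 2 = dep p \/
                       dep p' = dep p + 1 \/ dep p' = dep p + 2).
Proof.
rewrite /graph_square => dp /andP [ne /orP [a | /existsP [z /andP [a1 a2]]]].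
  case: y ne a => [p'|] ne /spider_adjE; last by move=> dp0; rewrite dp0 in dp.
  by move=> [E H]; right; exists p' => //; split=> //; lia.
case: z a1 a2 => [pz|] /spider_adjE; last by move=> dp0; rewrite dp0 in dp.
move=> [E1 H1]; case: y ne => [p'|] ne /spider_adjE; last by move=> E2; left; split=> //; lia.
move=> [E2 H2]; right; exists p' => //; split; first by rewrite -E2.
have : dep p' != dep p.
  by apply: contra ne => /eqP dd; rewrite (@leg_vertex_eq p p') // E1.
move/eqP; lia.
Qed.

Lemma square_nbr_label v w : deep v -> sq v w ->
  [\/ w = None /\ depth v = 1, label w + 1 = label v,
      label w + 2 = label v /\ 2 <= depth v | label v < label w /\ deep w].
Proof.
case: v => [p|] //= dp /(square_nbr_deep dp) [[-> d1]|[p' -> [E H]]].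
  by constructor 1.
rewrite /deep /= E; case: H => [h|[h|[h|h]]].
- by constructor 2; lia.
- by constructor 3; split; lia.
- by constructor 4; split; lia.
- by constructor 4; split; lia.
Qed.

Lemma square_sym : symmetric sq.
Proof.
have adj_sym : symmetric adj by move=> x y; rewrite /spider_adj orbC.
move=> x y; rewrite /graph_square eq_sym (adj_sym x y); congr (_ && (_ || _)).
by apply/existsP/existsP => -[z /andP [a b]]; exists z; rewrite adj_sym b adj_sym a.
Qed.

Lemma square_irr : irreflexive sq.
Proof. by move=> x; rewrite /graph_square eqxx. Qed.

Local Notation k := m.+2.

Definition win (v : T) := label v %/ k.
Definition off (v : T) := label v %% k.
Definition window (t : nat) := [set w : T | win w == t].

Lemma labelE v : label v = win v * k + off v.
Proof. exact: divn_eq. Qed.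

Lemma off_lt v : off v < k.
Proof. exact: ltn_pmod. Qed.

Lemma win_mono x y : label x <= label y -> win x <= win y.
Proof. exact: leq_div2r. Qed.

Lemma win_lt v : win v < ceil_div #|T| k.
Proof.
rewrite /ceil_div card_vertices /win; have := label_lt v.
have -> : nverts + k.-1 = 1 * k + nverts.-1 by rewrite /nverts /=; lia.
rewrite divnMDl // add1n ltnS => lt; apply: leq_div2r; rewrite /nverts in lt *; lia.
Qed.

Lemma card_window t : #|window t| <= k.
Proof.
rewrite -[X in _ <= X](size_iota (t * k) k).
apply: (@card_le_size_inj _ _ label) => [x y _ _|x]; first exact: label_inj.
by rewrite inE => /eqP wx; rewrite mem_iota labelE wx leq_addr ltn_add2l off_lt.
Qed.

Lemma window_below x y d : label y + d = label x -> d <= off x ->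
  win y = win x /\ off y = off x - d.
Proof.
move=> E dx; apply: divmod_unique; first by apply: leq_ltn_trans (off_lt x); exact: leq_subr.
by have := labelE x; lia.
Qed.

Lemma full_window_label t o : #|window t| = k -> o < k ->
  exists2 y, y \in window t & label y = t * k + o.
Proof.
move=> full ok.
have labels_uniq : uniq (map label (enum (window t))).
  by rewrite map_inj_uniq ?enum_uniq //; exact: label_inj.
have labels_sub : {subset map label (enum (window t)) <= iota (t * k) k}.
  move=> x /mapP [y]; rewrite mem_enum inE => /eqP wy ->.
  by rewrite mem_iota labelE wy leq_addr ltn_add2l off_lt.
have labels_size : size (iota (t * k) k) <= size (map label (enum (window t))).
  by rewrite size_iota size_map -cardE full.
have [_ labels_eq] := uniq_min_size labels_uniq labels_sub labels_size.
have : t * k + o \in map label (enum (window t)).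
  by rewrite labels_eq mem_iota leq_addr ltn_add2l.
by case/mapP => y; rewrite mem_enum => yW ->; exists y.
Qed.

Hypothesis hm : 3 <= m.
Hypothesis hsorted : forall i j : 'I_m, i <= j -> l i <= l j.

(* Two consecutive labels with the first at depth at most 1 are consecutive
   vertices of one leg, unless the first label is small: a leg of length at
   most 2 is preceded (legs being sorted) only by legs of length at most 2. *)
Lemma consecutive_labels px py : label (Some py) = (label (Some px)).+1 ->
  dep px <= 1 ->
  (leg py = leg px /\ dep py = (dep px).+1) \/ label (Some px) <= 2 * m - 2.
Proof.
rewrite /= => E d1; case: (ltngtP (leg px) (leg py)) => [lt|lt|/val_inj eq_leg].
- right; have := leg_start_lt lt; have := dep_lt px => dl start_py.
  have short : l (leg px) <= 2 by lia.
  have := @leg_start_short (leg px) (fun i hi => leq_trans (hsorted (ltnW hi)) short).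
  have := ltn_ord (leg py); lia.
- by have := leg_start_lt lt; have := dep_lt py; lia.
- by left; split=> //; move: E; rewrite eq_leg; lia.
Qed.

(* Every full window beyond the first contains a vertex of depth >= 2 with
   offset >= 2: among the offsets m-1, m, m+1 (all >= 2 as m >= 3) the labels
   are large, so depths <= 1 would force three consecutive depths on one leg. *)
Lemma full_window_deep t : 0 < t -> #|window t| = k ->
  exists2 z, z \in window t & 2 <= off z /\ 2 <= depth z.
Proof.
move=> t_gt0 full; have tk : k <= t * k by rewrite leq_pmull.
have good y o : y \in window t -> label y = t * k + o -> 2 <= o < k ->
    2 <= depth y -> exists2 z, z \in window t & 2 <= off z /\ 2 <= depth z.
  move=> yW ly /andP [o2 ok] dy; exists y => //; split=> //.
  by rewrite /off; have [_ ->] := divmod_unique ok ly.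
have [y0 W0 l0] := @full_window_label t m.-1 full ltac:(lia).
have [y1 W1 l1] := @full_window_label t m full ltac:(lia).
have [y2 W2 l2] := @full_window_label t m.+1 full ltac:(lia).
case: (leqP 2 (depth y0)) => [d0|d0]; first by apply: (good y0 m.-1) => //; lia.
case: (leqP 2 (depth y1)) => [d1|d1]; first by apply: (good y1 m) => //; lia.
case: (leqP 2 (depth y2)) => [d2|d2]; first by apply: (good y2 m.+1) => //; lia.
exfalso; case: y0 y1 y2 l0 l1 l2 d0 d1 d2 {W0 W1 W2} => [p0|] [p1|] [p2|] /=;
  try lia; move=> l0 l1 l2 d0 d1 d2.
have e01 : label (Some p1) = (label (Some p0)).+1 by rewrite /= l0 l1; lia.
have e12 : label (Some p2) = (label (Some p1)).+1 by rewrite /= l1 l2; lia.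
case: (consecutive_labels e01 (ltnSE d0)) => [[_ h1]|]; last by rewrite /= l0; lia.
case: (consecutive_labels e12 (ltnSE d1)) => [[_ h2]|]; last by rewrite /= l1; lia.
lia.
Qed.

Definition prio (v : T) :=
  if off v == 0 then 2 else if (off v == 1) || (depth v == 1) then 1 else 0.

Definition deep_key (v : T) := 3 * win v + (2 - prio v).

Definition rk (v : T) := match v with
  | None => 0
  | Some p => if dep p == 0 then (leg p).+1
              else m.+1 + (deep_key v * nverts + label v)
  end.

Lemma prio_le2 v : prio v <= 2.
Proof. by rewrite /prio; case: ifP => //; case: ifP. Qed.

Lemma prio_eq2 v : prio v = 2 -> off v = 0.
Proof. by rewrite /prio; case: ifP => [/eqP //|_]; case: ifP. Qed.

Lemma prio_eq0 v : 2 <= off v -> 2 <= depth v -> prio v = 0.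
Proof. by rewrite /prio; case: (off v) => [|[|o]] //; case: (depth v) => [|[|d]]. Qed.

Lemma rk_deep v : deep v -> rk v = m.+1 + (deep_key v * nverts + label v).
Proof. by case: v => [p|] //; rewrite /deep /= /rk => dp; rewrite eqn0Ngt dp. Qed.

Lemma rk_shallow v : ~~ deep v -> rk v <= m.
Proof. by case: v => [p|] //; rewrite /deep /= -eqn0Ngt /rk => ->; exact: ltn_ord. Qed.

Lemma rk_lt_key x y : deep x -> deep y -> deep_key x < deep_key y -> rk x < rk y.
Proof.
move=> dx dy lt_key; rewrite (rk_deep dx) (rk_deep dy) ltn_add2l.
have := label_lt x; nia.
Qed.

Lemma rk_shallow_lt x y : ~~ deep x -> deep y -> rk x < rk y.
Proof.
by move=> dx dy; rewrite (rk_deep dy); apply: leq_ltn_trans (rk_shallow dx) (leq_addr _ _).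
Qed.

Lemma rk_inj : injective rk.
Proof.
move=> x y E; case dx: (deep x); case dy: (deep y).
- apply: label_inj; move: E; rewrite (rk_deep dx) (rk_deep dy) => /addnI.
  by move/(congr1 (modn^~ nverts)); rewrite !modnMDl !modn_small ?label_lt.
- by have := rk_shallow_lt (negbT dy) dx; rewrite E ltnn.
- by have := rk_shallow_lt (negbT dx) dy; rewrite E ltnn.
case: x y E dx dy => [p|] [p'|] //=; rewrite /deep /= /rk.
- move=> + /negbT + /negbT; rewrite -!eqn0Ngt => + /eqP d /eqP d'; rewrite d d' /=.
  by move=> /succn_inj /val_inj eq_leg; congr Some; apply: leg_vertex_eq; rewrite ?d ?d'.
- by move=> + /negbT; rewrite -eqn0Ngt => /[swap] /eqP ->.
- by move=> + _ /negbT; rewrite -eqn0Ngt => /[swap] /eqP ->.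
Qed.

Lemma key_le_of_rk x y : deep x -> deep y -> rk x < rk y -> deep_key x <= deep_key y.
Proof. by move=> dx dy; apply: contraTT; rewrite -ltnNge -leqNgt => /(rk_lt_key dy dx) /ltnW. Qed.

Definition conflicts (v : T) :=
  [set w : T | (rk w < rk v) && (sq v w || (win w == win v))].

Lemma conflicts_rk v w : w \in conflicts v -> rk w < rk v.
Proof. by rewrite inE => /andP []. Qed.

Lemma conflicts_neq v w : w \in conflicts v -> w != v.
Proof. by move/conflicts_rk; apply: contraTneq => ->; rewrite ltnn. Qed.

Lemma card_conflicts_shallow v : ~~ deep v -> #|conflicts v| < k.
Proof.
move=> dv; apply: (@leq_ltn_trans (rk v)); last by have := rk_shallow dv; lia.
rewrite -[X in _ <= X](size_iota 0).
apply: (@card_le_size_inj _ _ rk) => [x y _ _|x /conflicts_rk]; first exact: rk_inj.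
by rewrite mem_iota.
Qed.

Definition back1 (v : T) := [set w : T | label w + 1 == label v].
Definition back2 (v : T) :=
  if depth v == 1 then [set None] else [set w : T | label w + 2 == label v].

Lemma card_back1 v : #|back1 v| <= 1.
Proof.
apply/card_le1_eqP => x y; rewrite !inE => /eqP lx /eqP ly.
by apply: label_inj; apply: (@addIn 1); rewrite lx ly.
Qed.

Lemma card_back2 v : #|back2 v| <= 1.
Proof.
rewrite /back2; case: ifP => _; first by rewrite cards1.
apply/card_le1_eqP => x y; rewrite !inE => /eqP lx /eqP ly.
by apply: label_inj; apply: (@addIn 2); rewrite lx ly.
Qed.

Definition other_heads (a : 'I_m) :=
  [set w : T | if w is Some p then (dep p == 0) && (leg p != a) else false].

Lemma card_other_heads a : #|other_heads a| <= m.-1.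
Proof.
pose head_leg (w : T) := if w is Some p then leg p else a.
have head_inj : {in other_heads a &, injective head_leg}.
  move=> [p|] [p'|]; rewrite !inE // => /andP [/eqP d _] /andP [/eqP d' _] /= eq_leg.
  by congr Some; apply: leg_vertex_eq; rewrite ?d ?d'.
have -> : m.-1 = #|[set~ a]| by rewrite cardsC1 card_ord.
rewrite -(card_in_imset head_inj); apply: subset_leq_card.
by apply/subsetP => y /imsetP [[p|]]; rewrite !inE // => /andP [_ ne] ->.
Qed.

Section DeepVertex.
Variable p : leg_vertex.
Hypothesis dp : 0 < dep p.
Local Notation v := (Some p).
Local Notation t := (win (Some p)).

Let v_deep : deep v. Proof. exact: dp. Qed.
Let v_window : v \in window t. Proof. by rewrite inE. Qed.

Lemma conflict_key_le w : w \in conflicts v -> deep w -> deep_key w <= deep_key v.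
Proof. by move=> /conflicts_rk wv dw; exact: key_le_of_rk. Qed.

Lemma conflict_win_le w : w \in conflicts v -> deep w -> win w <= t.
Proof.
move=> wC dw; have := conflict_key_le wC dw; rewrite /deep_key.
have := prio_le2 w; have := prio_le2 v; lia.
Qed.

Lemma conflicts_deep_sub : conflicts v \subset (window t :\ v) :|: (back1 v :|: back2 v).
Proof.
apply/subsetP => w wC; rewrite !inE (conflicts_neq wC) andTb.
move: (wC); rewrite inE => /andP [_ /orP [sq_vw|->//]].
case: (eqVneq (win w) t) => //= wt.
case: (square_nbr_label v_deep sq_vw) => [[-> d1]|lw|[lw d2]|[lt dw]].
- by rewrite /back2 d1 inE eqxx orbT.
- by rewrite lw eqxx.
- have d1 : depth v != 1 by apply: contraTneq d2 => ->.
  by rewrite /back2 (negbTE d1) inE lw eqxx orbT.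
- by have := win_mono (ltnW lt); have := conflict_win_le wC dw; lia.
Qed.

Lemma back1_window : 0 < off v -> back1 v \subset window t.
Proof.
move=> o1; apply/subsetP => w; rewrite !inE => /eqP lw.
by have [-> _] := window_below lw o1.
Qed.

(* Priority 0: offset and depth at least 2, all conflicts are window-mates. *)
Lemma card_conflicts_prio0 : 2 <= off v -> 2 <= depth v -> #|conflicts v| < k.
Proof.
move=> o2 d2; have d1 : depth v != 1 by apply: contraTneq d2 => ->.
have back2_window : back2 v \subset window t.
  apply/subsetP => w; rewrite /back2 (negbTE d1) inE => /eqP lw.
  by rewrite inE; have [-> _] := window_below lw o2.
have sub : conflicts v \subset window t :\ v.
  apply/subsetP => w wC; move/subsetP: conflicts_deep_sub => /(_ w wC).
  rewrite !in_setU => /orP [//|/orP [w1|w2]]; rewrite in_setD1 (conflicts_neq wC) /=.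
    by move/subsetP: (back1_window (ltnW o2)) => ->.
  by move/subsetP: back2_window => ->.
apply: leq_ltn_trans (subset_leq_card sub) _.
by rewrite cardsD1_in //; have := card_window t; lia.
Qed.

(* Priority 1: besides window-mates only back2 v can conflict; when the
   window is full it contains a priority-0 vertex, coloured after v. *)
Lemma card_conflicts_prio1 : 0 < off v -> prio v = 1 -> #|conflicts v| < k.
Proof.
move=> o1 pv; have cW := card_window t.
have sub : conflicts v \subset (window t :\ v) :|: back2 v.
  apply/subsetP => w wC; move/subsetP: conflicts_deep_sub => /(_ w wC).
  rewrite !in_setU => /orP [->//|/orP [w1|->]]; last by rewrite orbT.
  by rewrite in_setD1 (conflicts_neq wC); move/subsetP: (back1_window o1) => ->.
have [t0|t_gt0] := posnP t.
  have sub0 : conflicts v \subset window t :\ v.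
    apply/subsetP => w wC; move/subsetP: sub => /(_ w wC).
    rewrite in_setU => /orP [//|w2]; rewrite in_setD1 (conflicts_neq wC) inE t0.
    have lw : label w < label v.
      by move: w2; rewrite /back2; case: ifP => _; rewrite inE => /eqP lw;
        [rewrite lw /=|]; lia.
    by rewrite /win divn_small //; have := labelE v; have := off_lt v; rewrite t0; lia.
  by apply: leq_ltn_trans (subset_leq_card sub0) _; rewrite cardsD1_in //; lia.
have [full|not_full] := eqVneq #|window t| k; last first.
  apply: leq_ltn_trans (subset_leq_card sub) _.
  apply: leq_ltn_trans (leq_card_setU _ _).1 _; rewrite cardsD1_in //.
  have := card_back2 v; have : #|window t| < k by rewrite ltn_neqAle not_full cW.
  move: #|window t| #|back2 v| => a b; lia.
have [z zW [oz dz]] := full_window_deep t_gt0 full.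
have zC : z \notin conflicts v.
  apply: contraL (oz) => /conflict_key_le /(_ (leq_trans _ dz)) /=.
  by rewrite /deep_key (prio_eq0 oz dz) pv; move: zW; rewrite inE => /eqP->; lia.
have zWv : z \in window t :\ v.
  by rewrite in_setD1 zW andbT; apply/eqP => zv; move: pv; rewrite -zv prio_eq0.
have sub' : conflicts v \subset ((window t :\ v) :\ z) :|: back2 v.
  apply/subsetP => w wC; move/subsetP: sub => /(_ w wC).
  rewrite !in_setU in_setD1 => /orP [->|->]; last by rewrite orbT.
  by rewrite andbT; apply/orP; left; apply: contraNneq zC => <-.
apply: leq_ltn_trans (subset_leq_card sub') _.
apply: leq_ltn_trans (leq_card_setU _ _).1 _; rewrite !cardsD1_in // full.
by have := card_back2 v; move: #|back2 v| => b; lia.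
Qed.

(* Priority 2 (offset 0): the window-mates coloured before v are heads of
   other legs, so at most (m - 1) + 2 vertices conflict with v. *)
Lemma card_conflicts_prio2 : off v = 0 -> #|conflicts v| < k.
Proof.
move=> o0; have lv := labelE v; rewrite o0 addn0 in lv.
have pv : prio v = 2 by rewrite /prio o0.
have sub : conflicts v \subset other_heads (leg p) :|: (back1 v :|: back2 v).
  apply/subsetP => w wC; move/subsetP: conflicts_deep_sub => /(_ w wC).
  rewrite !in_setU in_setD1 inE => /orP [/andP [wv /eqP wt]|->]; last by rewrite orbT.
  apply/orP; left; case dw: (deep w).
    have := conflict_key_le wC dw; rewrite /deep_key wt pv => key_le.
    have /prio_eq2 ow : prio w = 2 by have := prio_le2 w; lia.
    have wv' : w = v by apply: label_inj; rewrite labelE ow wt lv addn0.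
    by rewrite wv' eqxx in wv.
  case: w wC wv wt dw => [p'|] _ wv wt; last first.
    by move: lv; rewrite -wt /win /= div0n.
  rewrite /deep /= inE => /negbT; rewrite -eqn0Ngt => /eqP d0; rewrite d0 eqxx /=.
  apply/eqP => eq_leg.
  have lw : label (Some p') < t * k by rewrite -lv /= eq_leg d0; lia.
  have : win (Some p') != t by rewrite neq_ltn /win ltn_divLR // lw.
  by rewrite wt eqxx.
apply: leq_ltn_trans (subset_leq_card sub) _.
apply: leq_ltn_trans (leq_card_setU _ _).1 _.
apply: leq_ltn_trans (leq_add (leqnn _) (leq_card_setU _ _).1) _.
have := card_other_heads (leg p); have := card_back1 v; have := card_back2 v.
by move: #|other_heads _| #|back1 v| #|back2 v| => a b c; lia.
Qed.

Lemma card_conflicts_deep : #|conflicts v| < k.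
Proof.
have [o0|o_gt0] := posnP (off v); first exact: card_conflicts_prio2.
case pv: (prio v == 1); first exact: card_conflicts_prio1 (eqP pv).
move: pv; rewrite /prio eqn0Ngt o_gt0 /=; case: ifP => // /negbT.
rewrite negb_or => /andP [o1 d1] _.
apply: card_conflicts_prio0.
  by move: o_gt0 o1; case: (off v) => [|[|]].
by move: dp d1 => /=; case: (dep p) => [|[|]].
Qed.

End DeepVertex.

Lemma card_conflicts v : #|conflicts v| < k.
Proof.
case: v => [p|]; last exact: card_conflicts_shallow.
have [dp|] := posnP (dep p); last exact: card_conflicts_deep.
by apply: card_conflicts_shallow; rewrite /deep /= dp.
Qed.

End Spider.

Theorem lemma2p4 (m : nat) (l : 'I_m -> nat)
    (hm : 3 <= m)
    (hpos : forall i, 0 < l i)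
    (hsorted : forall i j : 'I_m, i <= j -> l i <= l j) :
  equitably_choosable (graph_square (@spider_adj m l)) m.+2.
Proof.
apply: (@greedy_equitable _ _ _ (@win m l) (@rk m l)).
- exact: square_sym.
- exact: square_irr.
- exact: rk_inj.
- exact: card_conflicts hm hsorted.
- exact: win_lt.
Qed.
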